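(* Let $\lambda$ be a nonzero real number. For every integer $n\ge0$, \[ \sum_{k=0}^{n}(-1)^{k}\,2^{-k-1}\,k!\,S_{2,\lambda}(n,k)=\frac{1}{n+1}\Big(\beta_{n+1,\lambda}-2^{n+1}\beta_{n+1,\frac{\lambda}{2}}\Big). \]
   Context: For nonzero real $\lambda$: $(x)_{0,\lambda}=1$, $(x)_{n,\lambda}=x(x-\lambda)\cdots(x-(n-1)\lambda)$ for $n\ge1$, and $(x)_k=x(x-1)\cdots(x-k+1)$. The degenerate Stirling numbers of the second kind $S_{2,\lambda}(n,k)$ are defined by $(x)_{n,\lambda}=\sum_{k=0}^{n}S_{2,\lambda}(n,k)(x)_{k}$. The degenerate Bernoulli numbers $\beta_{n,\mu}$ (for nonzero real $\mu$) are defined by $\frac{t}{e_{\mu}(t)-1}=\sum_{n=0}^{\infty}\beta_{n,\mu}\frac{t^{n}}{n!}$ with $e_\mu(t)=(1+\mu t)^{1/\mu}$; here $\mu=\lambda$ or $\mu=\lambda/2$. *)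

From Stdlib Require Import Reals.
From Coquelicot Require Import Coquelicot.
Open Scope R_scope.

Fixpoint gfall (x lam : R) (n : nat) : R :=
  match n with
  | O => 1
  | S m => gfall x lam m * (x - INR m * lam)
  end.

Definition falling (x : R) (k : nat) : R := gfall x 1 k.

Definition is_deg_stirling2 (lam : R) (S2 : nat -> nat -> R) : Prop :=
  forall (n : nat) (x : R),
    gfall x lam n = sum_f_R0 (fun k => S2 n k * falling x k) n.

Definition e_deg (mu t : R) : R := Rpower (1 + mu * t) (/ mu).

(* generating function t / (e_mu(t) - 1), extended by its limit 1 at t = 0 *)
Definition deg_bern_gf (mu : R) (t : R) : R :=
  if Req_EM_T t 0 then 1 else t / (e_deg mu t - 1).

(* beta_{n,mu} = n! * [t^n] (t/(e_mu(t)-1)) = n-th derivative at 0 *)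
Definition deg_bernoulli (n : nat) (mu : R) : R :=
  Derive_n (deg_bern_gf mu) n 0.

From Stdlib Require Import Reals Lra Lia Factorial Classical Wf_nat.
From Coquelicot Require Import Coquelicot.
Open Scope R_scope.

(* Write [e = e_lam(t) = sum_n (1)_{n,lam} t^n / n!].  Expanding
   [(e - 1)^k = sum_j C(k,j) (-1)^(k-j) e^j] and [e^j = sum_n (j)_{n,lam} t^n / n!]
   and taking k-th differences of falling factorials gives
   [(e - 1)^k = sum_n k! S_{2,lam}(n,k) t^n / n!], so the left-hand side is
   [n!] times the coefficient of [t^n] in
   [sum_k (-1)^k (e - 1)^k / 2^(k+1) = 1 / (e + 1)].
   On the other side [e_{lam/2}(2t) = e^2], hence
   [t/(e - 1) - 2t/(e^2 - 1) = t/(e + 1)], and the right-hand side is the same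
   coefficient.  To pass from [Derive_n] to coefficients, [e] is identified with
   its series through the equation [(1 + lam t) y' = y], and [t/(e - 1)] with
   the reciprocal of the series of [(e - 1)/t], whose radius of convergence is
   positive by a geometric bound on the coefficients of formal inverses. *)

Definition PS_one (n : nat) : R := if Nat.eqb n 0 then 1 else 0.

Lemma PS_mult_PS_one_l (b : nat -> R) n : PS_mult PS_one b n = b n.
Proof.
  unfold PS_mult, PS_one. destruct n as [|n].
  - simpl. ring.
  - rewrite decomp_sum by lia.
    rewrite (sum_eq _ (fun _ => 0)) by (intros; simpl; ring).
    rewrite sum_cte, Nat.sub_0_r. simpl. ring.
Qed.

Lemma sum_f_R0_swap (g : nat -> nat -> R) M N :
  sum_f_R0 (fun i => sum_f_R0 (fun k => g i k) M) N =
  sum_f_R0 (fun k => sum_f_R0 (fun i => g i k) N) M.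
Proof.
  induction N as [|N IH]; simpl; [reflexivity|].
  rewrite IH, <- plus_sum. reflexivity.
Qed.

Lemma sum_f_R0_telescope (u : nat -> R) n :
  sum_f_R0 (fun k => u k - u (S k)) n = u 0%nat - u (S n).
Proof. induction n as [|n IH]; simpl; [|rewrite IH]; ring. Qed.

Lemma sum_f_R0_indicator (a : nat -> R) k n :
  sum_f_R0 (fun m => if Nat.eqb m k then a m else 0) n = if Nat.leb k n then a k else 0.
Proof.
  induction n as [|n IH].
  - destruct k; reflexivity.
  - rewrite tech5, IH.
    destruct (Nat.eqb_spec (S n) k) as [<-|Hne].
    + rewrite (proj2 (Nat.leb_gt (S n) n)), Nat.leb_refl by lia. ring.
    + destruct (Nat.leb_spec k n), (Nat.leb_spec k (S n)); try lia; ring.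
Qed.

(** * Finite differences *)

Fixpoint iter_diff (k : nat) (phi : nat -> R) : R :=
  match k with
  | O => phi O
  | S k => iter_diff k (fun j => phi (S j) - phi j)
  end.

Lemma iter_diff_ext k phi psi :
  (forall j, phi j = psi j) -> iter_diff k phi = iter_diff k psi.
Proof.
  revert phi psi; induction k as [|k IH]; intros phi psi E; simpl.
  - apply E.
  - apply IH. intros j. rewrite !E. reflexivity.
Qed.

Lemma iter_diff_scal k c phi : iter_diff k (fun j => c * phi j) = c * iter_diff k phi.
Proof.
  revert phi; induction k as [|k IH]; intros phi; simpl; [reflexivity|].
  rewrite <- IH. apply iter_diff_ext. intros j. ring.
Qed.

Lemma iter_diff_sum k (g : nat -> nat -> R) N :
  iter_diff k (fun j => sum_f_R0 (fun m => g m j) N) =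
  sum_f_R0 (fun m => iter_diff k (g m)) N.
Proof.
  revert g; induction k as [|k IH]; intros g; simpl; [reflexivity|].
  rewrite <- IH. apply iter_diff_ext. intros j. symmetry. apply minus_sum.
Qed.

Lemma falling_S x m : falling x (S m) = falling x m * (x - INR m).
Proof. unfold falling; simpl; ring. Qed.

Lemma falling_0 m : falling 0 m = PS_one m.
Proof.
  induction m as [|m IH]; [reflexivity|].
  rewrite falling_S, IH. destruct m; unfold PS_one; simpl; ring.
Qed.

Lemma falling_add1 x m : falling (x + 1) (S m) = (x + 1) * falling x m.
Proof.
  induction m as [|m IH].
  - unfold falling; simpl; ring.
  - rewrite falling_S, IH, (falling_S x m), S_INR. ring.
Qed.

Lemma iter_diff_falling k m :
  iter_diff k (fun j => falling (INR j) m) = if Nat.eqb m k then INR (fact k) else 0.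
Proof.
  revert m; induction k as [|k IH]; intros m; cbn [iter_diff].
  - rewrite falling_0. destruct m; reflexivity.
  - destruct m as [|m].
    + rewrite (iter_diff_ext _ _ (fun j => 0 * falling (INR j) 0)).
      * rewrite iter_diff_scal. simpl. ring.
      * intros j. unfold falling. simpl. ring.
    + rewrite (iter_diff_ext _ _ (fun j => INR (S m) * falling (INR j) m)).
      * rewrite iter_diff_scal, IH. simpl Nat.eqb.
        destruct (Nat.eqb_spec m k) as [->|_]; [|ring].
        rewrite <- mult_INR. reflexivity.
      * intros j. rewrite (S_INR j), falling_add1, falling_S, (S_INR m). ring.
Qed.

(** * Coefficients of the degenerate exponential and its powers *)

(* The coefficient of [t^n] in [e_mu(t)^x = (1 + mu t)^(x/mu)]. *)
Definition dbinom (mu x : R) (n : nat) : R := gfall x mu n / INR (fact n).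

Lemma dbinom_0 mu x : dbinom mu x 0 = 1.
Proof. unfold dbinom; simpl; field. Qed.

Lemma dbinom_S mu x n : INR (S n) * dbinom mu x (S n) = (x - INR n * mu) * dbinom mu x n.
Proof.
  unfold dbinom. simpl gfall. rewrite fact_simpl, mult_INR.
  field. split; [apply INR_fact_neq_0 | apply not_0_INR; lia].
Qed.

Lemma dbinom_0_S mu n : dbinom mu 0 (S n) = 0.
Proof.
  unfold dbinom. replace (gfall 0 mu (S n)) with 0; [unfold Rdiv; ring|].
  induction n as [|n IH]; simpl in *; [|rewrite <- IH]; ring.
Qed.

Lemma PS_mult_dbinom_S mu x y n :
  INR (S n) * PS_mult (dbinom mu x) (dbinom mu y) (S n) =
  (x + y - INR n * mu) * PS_mult (dbinom mu x) (dbinom mu y) n.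
Proof.
  set (a := dbinom mu x). set (b := dbinom mu y). unfold PS_mult.
  rewrite scal_sum.
  rewrite (sum_eq _ (fun k => INR k * a k * b (S n - k)%nat +
                              a k * (INR (S n - k)%nat * b (S n - k)%nat))).
  2:{ intros k Hk.
      replace (INR (S n)) with (INR k + INR (S n - k)%nat) by (rewrite <- plus_INR; f_equal; lia).
      ring. }
  rewrite plus_sum, (decomp_sum (fun k => INR k * a k * b (S n - k)%nat)), tech5 by lia.
  rewrite Nat.sub_diag. simpl Nat.pred.
  rewrite (sum_eq (fun i => INR (S i) * a (S i) * b (S n - S i)%nat)
                  (fun i => (x - INR i * mu) * a i * b (n - i)%nat))
    by (intros i _; unfold a; rewrite dbinom_S; reflexivity).
  rewrite (sum_eq (fun k => a k * (INR (S n - k)%nat * b (S n - k)%nat))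
                  (fun k => a k * ((y - INR (n - k) * mu) * b (n - k)%nat)))
    by (intros k Hk; rewrite Nat.sub_succ_l by exact Hk; unfold b; rewrite dbinom_S; reflexivity).
  simpl INR. rewrite !Rmult_0_l, Rmult_0_r, Rplus_0_l, Rplus_0_r.
  rewrite scal_sum, <- plus_sum.
  apply sum_eq. intros i Hi. rewrite minus_INR by exact Hi. ring.
Qed.

Lemma dbinom_add mu x y n :
  PS_mult (dbinom mu x) (dbinom mu y) n = dbinom mu (x + y) n.
Proof.
  induction n as [|n IH].
  - unfold PS_mult. simpl. rewrite !dbinom_0. ring.
  - apply (Rmult_eq_reg_l (INR (S n))); [|apply not_0_INR; lia].
    rewrite PS_mult_dbinom_S, dbinom_S, IH. reflexivity.
Qed.

Definition em1 (mu : R) (n : nat) : R := dbinom mu 1 n - PS_one n.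

Definition ep1 (mu : R) (n : nat) : R := dbinom mu 1 n + PS_one n.

Lemma ep1_0_neq0 mu : ep1 mu 0 <> 0.
Proof. unfold ep1, PS_one. rewrite dbinom_0. simpl. lra. Qed.

(* The coefficients of [(e_mu(t) - 1)^k], the k-th forward difference of
   [j |-> e_mu(t)^j] at 0. *)
Definition em1_pow (mu : R) (k n : nat) : R := iter_diff k (fun j => dbinom mu (INR j) n).

Lemma em1_pow_0 mu n : em1_pow mu 0 n = PS_one n.
Proof. unfold em1_pow. destruct n; simpl; [apply dbinom_0 | apply dbinom_0_S]. Qed.

Lemma em1_pow_S mu k n : em1_pow mu (S k) n = PS_mult (em1 mu) (em1_pow mu k) n.
Proof.
  unfold PS_mult, em1_pow.
  rewrite (sum_eq _ (fun i => iter_diff k (fun j => em1 mu i * dbinom mu (INR j) (n - i))))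
    by (intros i _; rewrite iter_diff_scal; reflexivity).
  rewrite <- iter_diff_sum. cbn [iter_diff]. symmetry. apply iter_diff_ext. intros j.
  unfold em1.
  rewrite (sum_eq _ (fun i => dbinom mu 1 i * dbinom mu (INR j) (n - i) -
                              PS_one i * dbinom mu (INR j) (n - i))) by (intros; ring).
  rewrite minus_sum.
  change (PS_mult (dbinom mu 1) (dbinom mu (INR j)) n - PS_mult PS_one (dbinom mu (INR j)) n
          = dbinom mu (INR (S j)) n - dbinom mu (INR j) n).
  rewrite dbinom_add, PS_mult_PS_one_l, S_INR, Rplus_comm. reflexivity.
Qed.

Lemma em1_pow_lt mu k n : (n < k)%nat -> em1_pow mu k n = 0.
Proof.
  revert n; induction k as [|k IH]; intros n Hn; [lia|].
  rewrite em1_pow_S. unfold PS_mult.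
  rewrite (sum_eq _ (fun _ => 0)) by
    (intros [|i] Hi; [unfold em1, PS_one; rewrite dbinom_0; simpl; ring
                     | rewrite IH by lia; ring]).
  rewrite sum_cte. ring.
Qed.

Lemma em1_pow_stirling mu S2 k n : is_deg_stirling2 mu S2 -> (k <= n)%nat ->
  INR (fact n) * em1_pow mu k n = INR (fact k) * S2 n k.
Proof.
  intros HS Hk. unfold em1_pow.
  rewrite <- iter_diff_scal.
  rewrite (iter_diff_ext _ _ (fun j => sum_f_R0 (fun m => S2 n m * falling (INR j) m) n)).
  2:{ intros j. rewrite <- HS. unfold dbinom. field. apply INR_fact_neq_0. }
  rewrite iter_diff_sum.
  rewrite (sum_eq _ (fun m => if Nat.eqb m k then INR (fact k) * S2 n m else 0)).
  - rewrite sum_f_R0_indicator, (proj2 (Nat.leb_le k n) Hk). reflexivity.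
  - intros m _. rewrite iter_diff_scal, iter_diff_falling.
    destruct (Nat.eqb_spec m k) as [->|_]; ring.
Qed.

(* [1 / (1 + e) = 1 / (2 + (e - 1)) = sum_k (-1)^k (e - 1)^k / 2^(k+1)]; only
   the terms [k <= n] contribute to the coefficient of [t^n]. *)
Definition inv_ep1_coef (mu : R) (n : nat) : R :=
  sum_f_R0 (fun k => (-1) ^ k / 2 ^ (k + 1) * em1_pow mu k n) n.

Lemma inv_ep1_coef_wide mu n N : (n <= N)%nat ->
  inv_ep1_coef mu n = sum_f_R0 (fun k => (-1) ^ k / 2 ^ (k + 1) * em1_pow mu k n) N.
Proof.
  induction 1 as [|N HN IH]; [reflexivity|].
  rewrite tech5, <- IH, em1_pow_lt by lia. ring.
Qed.

Lemma PS_mult_ep1 mu c n : PS_mult (ep1 mu) c n = 2 * c n + PS_mult (em1 mu) c n.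
Proof.
  rewrite <- (PS_mult_PS_one_l c n) at 1. unfold PS_mult.
  rewrite scal_sum, <- plus_sum. apply sum_eq. intros i _. unfold ep1, em1. ring.
Qed.

Lemma PS_mult_em1_inv_ep1_coef mu n :
  PS_mult (em1 mu) (inv_ep1_coef mu) n =
  sum_f_R0 (fun k => (-1) ^ k / 2 ^ (k + 1) * em1_pow mu (S k) n) n.
Proof.
  unfold PS_mult.
  rewrite (sum_eq _ (fun i => sum_f_R0 (fun k =>
             em1 mu i * ((-1) ^ k / 2 ^ (k + 1) * em1_pow mu k (n - i))) n)).
  2:{ intros i _. rewrite (inv_ep1_coef_wide mu (n - i) n), scal_sum by lia.
      apply sum_eq. intros; ring. }
  rewrite sum_f_R0_swap. apply sum_eq. intros k _.
  rewrite em1_pow_S. unfold PS_mult. rewrite scal_sum. apply sum_eq. intros; ring.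
Qed.

(* The sum telescopes since [2 (-1)^(k+1) / 2^(k+2) = - (-1)^k / 2^(k+1)]. *)
Lemma PS_mult_ep1_inv_ep1_coef mu n : PS_mult (ep1 mu) (inv_ep1_coef mu) n = PS_one n.
Proof.
  rewrite PS_mult_ep1, PS_mult_em1_inv_ep1_coef. unfold inv_ep1_coef.
  rewrite scal_sum, <- plus_sum.
  set (u := fun k => (-1) ^ k / 2 ^ k * em1_pow mu k n).
  rewrite (sum_eq _ (fun k => u k - u (S k))).
  - rewrite sum_f_R0_telescope. unfold u.
    rewrite em1_pow_0, (em1_pow_lt mu (S n) n) by lia. simpl. field. apply pow_nonzero. lra.
  - intros k _. unfold u. rewrite Nat.add_1_r. simpl pow. field. apply pow_nonzero. lra.
Qed.

Lemma sum_stirling_inv_ep1 mu S2 n : is_deg_stirling2 mu S2 ->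
  sum_f_R0 (fun k => (-1) ^ k * / 2 ^ (k + 1) * INR (fact k) * S2 n k) n
  = INR (fact n) * inv_ep1_coef mu n.
Proof.
  intros HS. unfold inv_ep1_coef. rewrite scal_sum. apply sum_eq. intros k Hk.
  rewrite Rmult_assoc, <- (em1_pow_stirling mu S2 k n HS Hk). unfold Rdiv. ring.
Qed.

(** * Formal inverses of power series *)

(* [PS_inv_trunc p m] agrees with the formal inverse of [p] on the indices
   [k <= m]; carrying this whole prefix gives course-of-values recursion. *)
Fixpoint PS_inv_trunc (p : nat -> R) (m : nat) : nat -> R :=
  match m with
  | O => fun _ => / p O
  | S m => fun k => if Nat.leb k m then PS_inv_trunc p m k
                   else - / p O * sum_f_R0 (fun i => p (S i) * PS_inv_trunc p m (m - i)%nat) m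
  end.

Definition PS_inv (p : nat -> R) (n : nat) : R := PS_inv_trunc p n n.

Lemma PS_inv_trunc_le p m k : (k <= m)%nat -> PS_inv_trunc p m k = PS_inv p k.
Proof.
  revert k; induction m as [|m IH]; intros k Hk.
  - replace k with 0%nat by lia. reflexivity.
  - cbn [PS_inv_trunc]. destruct (Nat.leb_spec k m) as [Hkm|Hkm].
    + apply IH, Hkm.
    + replace k with (S m) by lia. unfold PS_inv. cbn [PS_inv_trunc].
      rewrite (proj2 (Nat.leb_gt (S m) m)) by lia. reflexivity.
Qed.

Lemma PS_inv_0 p : PS_inv p 0 = / p 0%nat.
Proof. reflexivity. Qed.

Lemma PS_inv_S p m :
  PS_inv p (S m) = - / p 0%nat * sum_f_R0 (fun i => p (S i) * PS_inv p (m - i)%nat) m.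
Proof.
  unfold PS_inv at 1. cbn [PS_inv_trunc].
  rewrite (proj2 (Nat.leb_gt (S m) m)) by lia. f_equal.
  apply sum_eq. intros i Hi. rewrite PS_inv_trunc_le by lia. reflexivity.
Qed.

Lemma PS_mult_PS_inv p n : p 0%nat <> 0 -> PS_mult p (PS_inv p) n = PS_one n.
Proof.
  intros Hp. unfold PS_mult, PS_one. destruct n as [|m].
  - simpl. rewrite PS_inv_0. field. exact Hp.
  - rewrite decomp_sum by lia. simpl Nat.pred. rewrite Nat.sub_0_r, PS_inv_S.
    change (sum_f_R0 (fun i => p (S i) * PS_inv p (S m - S i)%nat) m)
      with (sum_f_R0 (fun i => p (S i) * PS_inv p (m - i)%nat) m).
    simpl Nat.eqb. cbv iota. field. exact Hp.
Qed.

Lemma PS_mult_inj_l p c1 c2 : p 0%nat <> 0 ->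
  (forall n, PS_mult p c1 n = PS_mult p c2 n) -> forall n, c1 n = c2 n.
Proof.
  intros Hp H n. induction n as [n IH] using lt_wf_ind.
  specialize (H n). unfold PS_mult in H.
  apply (Rmult_eq_reg_l (p 0%nat)); [|exact Hp].
  destruct n as [|m]; [simpl in H; exact H|].
  rewrite !(decomp_sum _ (S m)), !Nat.sub_0_r in H by lia. simpl Nat.pred in H.
  rewrite (sum_eq (fun i => p (S i) * c1 (S m - S i)%nat)
                  (fun i => p (S i) * c2 (S m - S i)%nat)) in H
    by (intros i Hi; rewrite IH by lia; reflexivity).
  lra.
Qed.

Lemma inv_ep1_coef_PS_inv mu n : inv_ep1_coef mu n = PS_inv (ep1 mu) n.
Proof.
  apply (PS_mult_inj_l (ep1 mu)); [apply ep1_0_neq0|]. intros m.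
  rewrite PS_mult_ep1_inv_ep1_coef, PS_mult_PS_inv; [reflexivity | apply ep1_0_neq0].
Qed.

Lemma sum_pow_S_le s m : 0 <= s < 1 -> sum_f_R0 (fun i => s ^ S i) m <= s / (1 - s).
Proof.
  intros Hs.
  rewrite (sum_eq _ (fun i => s ^ i * s)) by (intros; simpl; ring).
  rewrite <- scal_sum, tech3 by lra.
  apply Rle_trans with (s * (1 / (1 - s))); [|right; field; lra].
  apply Rmult_le_compat_l; [lra|]. unfold Rdiv.
  apply Rmult_le_compat_r; [left; apply Rinv_0_lt_compat; lra|].
  pose proof (pow_le s (S m) (proj1 Hs)). lra.
Qed.

(* With [s = L / K = |p 0| / (|p 0| + M)], the geometric sum produced by the
   recursion of [PS_inv_S] is at most [s / (1 - s) = |p 0| / M]. *)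
Lemma PS_inv_bound p M L : p 0%nat <> 0 -> 0 < M -> 0 < L ->
  (forall n, Rabs (p n) <= M * L ^ n) ->
  forall n, Rabs (PS_inv p n) <= / Rabs (p 0%nat) * (L * (Rabs (p 0%nat) + M) / Rabs (p 0%nat)) ^ n.
Proof.
  intros Hp HM HL Hb.
  set (a := Rabs (p 0%nat)).
  assert (Ha : 0 < a) by (apply Rabs_pos_lt; exact Hp).
  set (K := L * (a + M) / a). set (s := a / (a + M)).
  assert (HK : 0 < K) by (unfold K; apply Rdiv_lt_0_compat; nra).
  assert (Hs : 0 <= s < 1).
  { unfold s. split; [apply Rlt_le, Rdiv_lt_0_compat; lra|].
    apply Rmult_lt_reg_r with (a + M); [lra|]. unfold Rdiv. rewrite Rmult_assoc, Rinv_l; lra. }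
  assert (HLK : L = s * K) by (unfold s, K; field; lra).
  intros n. induction n as [n IH] using lt_wf_ind. destruct n as [|m].
  - rewrite PS_inv_0, Rabs_inv, pow_O. fold a. lra.
  - rewrite PS_inv_S, Rabs_mult, Rabs_Ropp, Rabs_inv. fold a.
    apply Rmult_le_compat_l; [apply Rlt_le, Rinv_0_lt_compat, Ha|].
    eapply Rle_trans; [apply Rsum_abs|].
    apply Rle_trans with (sum_f_R0 (fun i => s ^ S i * (M / a * K ^ S m)) m).
    + apply sum_Rle. intros i Hi. rewrite Rabs_mult.
      apply Rle_trans with (M * L ^ S i * (/ a * K ^ (m - i))).
      * apply Rmult_le_compat; try apply Rabs_pos; [apply Hb | apply IH; lia].
      * right. rewrite HLK, Rpow_mult_distr.
        replace (K ^ S m) with (K ^ S i * K ^ (m - i)) by (rewrite <- pow_add; f_equal; lia).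
        unfold Rdiv. ring.
    + rewrite <- scal_sum.
      apply Rle_trans with (M / a * K ^ S m * (s / (1 - s))).
      * apply Rmult_le_compat_l; [|apply sum_pow_S_le, Hs].
        apply Rmult_le_pos; [apply Rlt_le, Rdiv_lt_0_compat; lra | apply pow_le; lra].
      * right. unfold s. field. lra.
Qed.

(** * Power series near 0 *)

Lemma CV_radius_ge_of_bound a M L : 0 < L ->
  (forall n, Rabs (a n) <= M * L ^ n) -> Rbar_le (/ L) (CV_radius a).
Proof.
  intros HL Hb. apply (proj1 (CV_radius_bounded a)). exists M. intros n.
  assert (HL' : 0 <= / L) by (apply Rlt_le, Rinv_0_lt_compat, HL).
  rewrite Rabs_mult, <- RPow_abs, (Rabs_pos_eq (/ L) HL').
  apply Rle_trans with (M * L ^ n * (/ L) ^ n).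
  - apply Rmult_le_compat_r; [apply pow_le, HL' | apply Hb].
  - rewrite Rmult_assoc, <- Rpow_mult_distr, Rinv_r, pow1 by lra. lra.
Qed.

Lemma CV_radius_gt0_of_bound a M L : 0 < L ->
  (forall n, Rabs (a n) <= M * L ^ n) -> Rbar_lt 0 (CV_radius a).
Proof.
  intros HL Hb. apply Rbar_lt_le_trans with (/ L).
  - apply Rinv_0_lt_compat, HL.
  - apply (CV_radius_ge_of_bound a M L HL Hb).
Qed.

Lemma CV_radius_gt0_bound a : Rbar_lt 0 (CV_radius a) ->
  exists M L, 0 < M /\ 0 < L /\ forall n, Rabs (a n) <= M * L ^ n.
Proof.
  intros Ha.
  destruct (classic (exists r, 0 < r /\ exists M, forall n, Rabs (a n * r ^ n) <= M))
    as [(r & Hr & M & HM)|Hno].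
  - exists (Rabs M + 1), (/ r). split; [pose proof (Rabs_pos M); lra|].
    split; [apply Rinv_0_lt_compat, Hr|]. intros n.
    specialize (HM n). rewrite Rabs_mult, (Rabs_pos_eq (r ^ n)) in HM by (apply pow_le; lra).
    replace (Rabs (a n)) with (Rabs (a n) * r ^ n * (/ r) ^ n)
      by (rewrite Rmult_assoc, <- Rpow_mult_distr, Rinv_r, pow1 by lra; ring).
    apply Rmult_le_compat_r; [apply pow_le, Rlt_le, Rinv_0_lt_compat, Hr|].
    pose proof (Rle_abs M). lra.
  - assert (Hub : Rbar_le (CV_radius a) 0).
    { apply (proj2 (CV_radius_bounded a)). intros r Hr. simpl.
      destruct (Rle_or_lt r 0) as [H|H]; [exact H|]. exfalso. eauto. }
    destruct (CV_radius a); simpl in *; lra.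
Qed.

Lemma CV_radius_PS_inv_gt0 p : p 0%nat <> 0 -> Rbar_lt 0 (CV_radius p) ->
  Rbar_lt 0 (CV_radius (PS_inv p)).
Proof.
  intros Hp Hr. destruct (CV_radius_gt0_bound p Hr) as (M & L & HM & HL & Hb).
  pose proof (Rabs_pos_lt _ Hp).
  refine (CV_radius_gt0_of_bound _ _ _ _ (PS_inv_bound p M L Hp HM HL Hb)).
  apply Rdiv_lt_0_compat; nra.
Qed.

Lemma CV_radius_scale_gt0 c a : Rbar_lt 0 (CV_radius a) ->
  Rbar_lt 0 (CV_radius (fun n => c ^ n * a n)).
Proof.
  intros Ha. destruct (CV_radius_gt0_bound a Ha) as (M & L & HM & HL & Hb).
  apply (CV_radius_gt0_of_bound _ M ((Rabs c + 1) * L)).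
  - pose proof (Rabs_pos c). nra.
  - intros n. rewrite Rabs_mult, <- RPow_abs, Rpow_mult_distr.
    pose proof (Rabs_pos c). pose proof (Rabs_pos (a n)).
    assert (Rabs c ^ n <= (Rabs c + 1) ^ n) by (apply pow_incr; lra).
    specialize (Hb n). pose proof (pow_le (Rabs c) n (Rabs_pos c)).
    pose proof (pow_le L n (Rlt_le _ _ HL)). nra.
Qed.

Lemma CV_radius_minus_gt0 a b : Rbar_lt 0 (CV_radius a) -> Rbar_lt 0 (CV_radius b) ->
  Rbar_lt 0 (CV_radius (PS_minus a b)).
Proof.
  intros Ha Hb.
  rewrite (CV_radius_ext _ (PS_plus a (PS_opp b))) by reflexivity.
  eapply Rbar_lt_le_trans; [|apply CV_radius_plus].
  rewrite CV_radius_opp. apply Rbar_min_case; assumption.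
Qed.

Lemma locally_0_ball (P : R -> Prop) r : 0 < r ->
  (forall t, Rabs t < r -> P t) -> locally 0 P.
Proof.
  intros Hr H. exists (mkposreal r Hr). intros t Ht. apply H.
  change (Rabs (t - 0) < r) in Ht. rewrite Rminus_0_r in Ht. exact Ht.
Qed.

Lemma locally_0_ball_inv (P : R -> Prop) : locally 0 P ->
  exists r, 0 < r /\ forall t, Rabs t < r -> P t.
Proof.
  intros [eps H]. exists eps. split; [apply cond_pos|]. intros t Ht. apply H.
  change (Rabs (t - 0) < eps). rewrite Rminus_0_r. exact Ht.
Qed.

Lemma locally_0_scal (P : R -> Prop) c : locally 0 P -> locally 0 (fun t => P (c * t)).
Proof.
  intros HP. destruct (locally_0_ball_inv P HP) as (r & Hr & H).
  pose proof (Rabs_pos c).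
  apply (locally_0_ball _ (r / (Rabs c + 1))); [apply Rdiv_lt_0_compat; lra|].
  intros t Ht. apply H. rewrite Rabs_mult.
  apply Rmult_lt_compat_r with (r := Rabs c + 1) in Ht; [|lra].
  unfold Rdiv in Ht. rewrite Rmult_assoc, Rinv_l, Rmult_1_r in Ht by lra.
  pose proof (Rabs_pos t). nra.
Qed.

Lemma locally_CV_radius a : Rbar_lt 0 (CV_radius a) ->
  locally 0 (fun x => Rbar_lt (Rabs x) (CV_radius a)).
Proof.
  intros Ha. destruct (CV_radius_gt0_bound a Ha) as (M & L & _ & HL & Hb).
  apply (locally_0_ball _ (/ L)); [apply Rinv_0_lt_compat, HL|].
  intros t Ht. eapply Rbar_lt_le_trans; [|apply (CV_radius_ge_of_bound a M L HL Hb)].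
  exact Ht.
Qed.

Lemma is_pseries_PS_one x : is_pseries PS_one x 1.
Proof.
  apply is_pseries_R.
  apply (is_series_ext (fun n => 0 ^ n)).
  - intros [|n]; unfold PS_one; simpl; ring.
  - replace 1 with (/ (1 - 0)) by (rewrite Rminus_0_r; apply Rinv_1).
    apply is_series_geom. rewrite Rabs_R0. lra.
Qed.

Lemma PSeries_mult_PS_inv p : p 0%nat <> 0 -> Rbar_lt 0 (CV_radius p) ->
  locally 0 (fun x => PSeries p x * PSeries (PS_inv p) x = 1).
Proof.
  intros Hp Hr.
  generalize (filter_and _ _ (locally_CV_radius p Hr)
               (locally_CV_radius _ (CV_radius_PS_inv_gt0 p Hp Hr))).
  apply filter_imp. intros x [Hx Hx'].
  rewrite <- PSeries_mult by assumption.
  rewrite (PSeries_ext _ PS_one) by (intros n; apply PS_mult_PS_inv, Hp).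
  apply is_pseries_unique, is_pseries_PS_one.
Qed.

Lemma PSeries_scale c a x : PSeries (fun n => c ^ n * a n) x = PSeries a (c * x).
Proof. apply Series_ext. intros n. rewrite Rpow_mult_distr. ring. Qed.

(** * The degenerate exponential *)

Lemma dbinom_1_bound mu n : Rabs (dbinom mu 1 n) <= (1 + Rabs mu) ^ n.
Proof.
  induction n as [|n IH].
  - rewrite dbinom_0, Rabs_R1. simpl. lra.
  - assert (Hn : 0 < INR (S n)) by (apply lt_0_INR; lia).
    apply Rmult_le_reg_l with (INR (S n)); [exact Hn|].
    rewrite <- (Rabs_pos_eq (INR (S n))) at 1 by lra.
    rewrite <- Rabs_mult, dbinom_S, Rabs_mult, <- tech_pow_Rmult.
    assert (H1 : Rabs (1 - INR n * mu) <= INR (S n) * (1 + Rabs mu)).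
    { eapply Rle_trans; [apply Rabs_triang|].
      rewrite Rabs_Ropp, Rabs_R1, Rabs_mult, (Rabs_pos_eq (INR n)) by apply pos_INR.
      rewrite S_INR. pose proof (pos_INR n). pose proof (Rabs_pos mu). nra. }
    rewrite <- Rmult_assoc.
    apply Rmult_le_compat; try apply Rabs_pos; assumption.
Qed.

Lemma CV_radius_dbinom_1 mu : Rbar_le (/ (1 + Rabs mu)) (CV_radius (dbinom mu 1)).
Proof.
  apply (CV_radius_ge_of_bound _ 1); [pose proof (Rabs_pos mu); lra|].
  intros n. rewrite Rmult_1_l. apply dbinom_1_bound.
Qed.

Lemma abs_lt_CV_radius_dbinom_1 mu t : Rabs t < / (1 + Rabs mu) ->
  Rbar_lt (Rabs t) (CV_radius (dbinom mu 1)).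
Proof.
  intros Ht. apply Rbar_lt_le_trans with (/ (1 + Rabs mu)); [exact Ht|].
  apply CV_radius_dbinom_1.
Qed.

Lemma one_add_mul_pos mu t : Rabs t < / (1 + Rabs mu) -> 0 < 1 + mu * t.
Proof.
  intros Ht. pose proof (Rabs_pos mu).
  assert (Hmt : Rabs (mu * t) < 1).
  { rewrite Rabs_mult.
    apply Rmult_lt_compat_r with (r := 1 + Rabs mu) in Ht; [|lra].
    rewrite Rinv_l in Ht by lra. pose proof (Rabs_pos t). nra. }
  destruct (Rabs_def2 _ _ Hmt). lra.
Qed.

Lemma locally_abs_lt_inv_one_add_abs mu : locally 0 (fun t => Rabs t < / (1 + Rabs mu)).
Proof.
  apply (locally_0_ball _ (/ (1 + Rabs mu))); [|tauto].
  apply Rinv_0_lt_compat. pose proof (Rabs_pos mu). lra.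
Qed.

Lemma is_derive_0_const (f : R -> R) r t :
  (forall u, Rabs u < r -> is_derive f u 0) -> Rabs t < r -> f t = f 0.
Proof.
  intros Hd Ht.
  assert (Hseg : forall u, Rmin 0 t <= u <= Rmax 0 t -> Rabs u < r).
  { intros u Hu. unfold Rmin, Rmax in Hu.
    destruct (Rle_dec 0 t);
      [rewrite Rabs_pos_eq in Ht by lra | rewrite Rabs_left in Ht by lra];
      apply Rabs_def1; lra. }
  destruct (MVT_gen f 0 t (fun _ => 0)) as (c & _ & Hc).
  - intros u Hu. apply Hd, Hseg. lra.
  - intros u Hu. apply derivable_continuous_pt. exists 0.
    apply is_derive_Reals, Hd, Hseg, Hu.
  - lra.
Qed.

Lemma dbinom_1_ode mu t : mu <> 0 -> Rbar_lt (Rabs t) (CV_radius (dbinom mu 1)) ->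
  (1 + mu * t) * PSeries (PS_derive (dbinom mu 1)) t = PSeries (dbinom mu 1) t.
Proof.
  intros Hmu Ht. set (b := dbinom mu 1).
  transitivity (PSeries (PS_derive b) t + mu * (t * PSeries (PS_derive b) t)); [ring|].
  rewrite <- PSeries_incr_1, <- PSeries_scal, <- PSeries_plus.
  - apply PSeries_ext. intros [|k].
    + change (INR 1 * b 1%nat + mu * 0 = b 0%nat).
      unfold b. rewrite dbinom_S. simpl. ring.
    + change (INR (S (S k)) * b (S (S k)) + mu * (INR (S k) * b (S k)) = b (S k)).
      unfold b. rewrite dbinom_S. ring.
  - apply ex_pseries_derive, Ht.
  - apply CV_radius_inside.
    rewrite CV_radius_scal, CV_radius_incr_1, CV_radius_derive by exact Hmu. exact Ht.
Qed.

(* Both [e_mu] and the series solve [(1 + mu t) y' = y] with [y 0 = 1]. *)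
Lemma e_deg_PSeries mu t : mu <> 0 -> Rabs t < / (1 + Rabs mu) ->
  e_deg mu t = PSeries (dbinom mu 1) t.
Proof.
  intros Hmu Ht.
  set (P := PSeries (dbinom mu 1)).
  set (E := fun u => exp (- (/ mu * ln (1 + mu * u)))).
  assert (Hd : forall u, Rabs u < / (1 + Rabs mu) -> is_derive (fun u => P u * E u) u 0).
  { intros u Hu.
    pose proof (one_add_mul_pos mu u Hu) as Hpos.
    pose proof (abs_lt_CV_radius_dbinom_1 mu u Hu) as Hrad.
    assert (HE : is_derive E u (- E u / (1 + mu * u))).
    { unfold E. auto_derive; [exact Hpos|]. field. split; lra. }
    replace 0 with (PSeries (PS_derive (dbinom mu 1)) u * E u + P u * (- E u / (1 + mu * u))).
    - apply (is_derive_mult P E u _ _ (is_derive_PSeries _ _ Hrad) HE). intros; apply Rmult_comm.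
    - unfold P. rewrite <- (dbinom_1_ode mu u Hmu Hrad). field. lra. }
  assert (H1 : P t * E t = 1).
  { rewrite (is_derive_0_const _ _ t Hd Ht). unfold P, E.
    rewrite PSeries_0, dbinom_0, Rmult_0_r, Rplus_0_r, ln_1, Rmult_0_r, Ropp_0, exp_0.
    ring. }
  unfold E in H1. rewrite exp_Ropp in H1.
  unfold e_deg, Rpower. fold P.
  pose proof (exp_pos (/ mu * ln (1 + mu * t))).
  apply (Rmult_eq_reg_r (/ exp (/ mu * ln (1 + mu * t)))).
  - rewrite H1, Rinv_r by lra. reflexivity.
  - apply Rinv_neq_0_compat. lra.
Qed.

Lemma e_deg_half lam t : lam <> 0 -> 0 < 1 + lam * t ->
  e_deg (lam / 2) (2 * t) = e_deg lam t ^ 2.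
Proof.
  intros Hl Hp. unfold e_deg.
  replace (1 + lam / 2 * (2 * t)) with (1 + lam * t) by field.
  replace (/ (lam / 2)) with (/ lam * INR 2) by (simpl; field; exact Hl).
  rewrite <- Rpower_mult, Rpower_pow; [reflexivity|]. unfold Rpower. apply exp_pos.
Qed.

Lemma e_deg_eq_1 lam t : lam <> 0 -> 0 < 1 + lam * t -> e_deg lam t = 1 -> t = 0.
Proof.
  intros Hl Hp He. unfold e_deg, Rpower in He.
  assert (H : / lam * ln (1 + lam * t) = 0) by (apply exp_inv; rewrite exp_0; exact He).
  apply Rmult_integral in H as [H|H].
  - exfalso. revert H. apply Rinv_neq_0_compat, Hl.
  - assert (H1 : 1 + lam * t = 1) by (apply ln_inv; [lra | lra | rewrite ln_1; exact H]).
    assert (Hlt : lam * t = 0) by lra.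
    apply Rmult_integral in Hlt as [|]; [contradiction | assumption].
Qed.

Lemma CV_radius_ep1_gt0 mu : Rbar_lt 0 (CV_radius (ep1 mu)).
Proof.
  pose proof (Rabs_pos mu).
  apply (CV_radius_gt0_of_bound _ 2 (1 + Rabs mu)); [lra|]. intros n.
  unfold ep1. eapply Rle_trans; [apply Rabs_triang|].
  pose proof (dbinom_1_bound mu n). pose proof (pow_R1_Rle (1 + Rabs mu) n ltac:(lra)).
  assert (Rabs (PS_one n) <= 1) by (unfold PS_one; destruct (Nat.eqb n 0);
    rewrite ?Rabs_R1, ?Rabs_R0; lra).
  lra.
Qed.

Lemma one_add_e_deg_PSeries mu t : mu <> 0 -> Rabs t < / (1 + Rabs mu) ->
  1 + e_deg mu t = PSeries (ep1 mu) t.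
Proof.
  intros Hmu Ht.
  rewrite e_deg_PSeries by assumption.
  rewrite (PSeries_ext (ep1 mu) (PS_plus (dbinom mu 1) PS_one)) by reflexivity.
  rewrite PSeries_plus, (is_pseries_unique PS_one t 1 (is_pseries_PS_one t)).
  - ring.
  - apply CV_radius_inside, abs_lt_CV_radius_dbinom_1, Ht.
  - eexists. apply is_pseries_PS_one.
Qed.

(** * Degenerate Bernoulli numbers *)

(* The coefficients of [(e_mu(t) - 1) / t], whose reciprocal is [deg_bern_gf mu]. *)
Definition em1_quot (mu : R) : nat -> R := PS_decr_1 (dbinom mu 1).

Lemma em1_quot_0 mu : em1_quot mu 0 = 1.
Proof.
  unfold em1_quot, PS_decr_1. pose proof (dbinom_S mu 1 0) as H.
  rewrite dbinom_0 in H. simpl in H. lra.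
Qed.

Lemma em1_quot_0_neq0 mu : em1_quot mu 0 <> 0.
Proof. rewrite em1_quot_0. lra. Qed.

Lemma CV_radius_em1_quot_gt0 mu : Rbar_lt 0 (CV_radius (em1_quot mu)).
Proof.
  unfold em1_quot. rewrite CV_radius_decr_1.
  apply Rbar_lt_le_trans with (/ (1 + Rabs mu)); [|apply CV_radius_dbinom_1].
  apply Rinv_0_lt_compat. pose proof (Rabs_pos mu). simpl. lra.
Qed.

Lemma CV_radius_PS_inv_em1_quot_gt0 mu : Rbar_lt 0 (CV_radius (PS_inv (em1_quot mu))).
Proof.
  apply CV_radius_PS_inv_gt0; [apply em1_quot_0_neq0 | apply CV_radius_em1_quot_gt0].
Qed.

Lemma e_deg_sub_1 mu t : mu <> 0 -> Rabs t < / (1 + Rabs mu) ->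
  e_deg mu t - 1 = t * PSeries (em1_quot mu) t.
Proof.
  intros Hmu Ht.
  pose proof (CV_radius_inside _ _ (abs_lt_CV_radius_dbinom_1 mu t Ht)) as Hex.
  rewrite e_deg_PSeries, (PSeries_decr_1 _ _ Hex), dbinom_0 by assumption.
  unfold em1_quot. ring.
Qed.

Lemma deg_bern_gf_PSeries mu : mu <> 0 ->
  locally 0 (fun t => deg_bern_gf mu t = PSeries (PS_inv (em1_quot mu)) t).
Proof.
  intros Hmu.
  generalize (filter_and _ _ (locally_abs_lt_inv_one_add_abs mu)
    (PSeries_mult_PS_inv _ (em1_quot_0_neq0 mu) (CV_radius_em1_quot_gt0 mu))).
  apply filter_imp. intros t [Ht Hinv].
  unfold deg_bern_gf. destruct (Req_EM_T t 0) as [->|Ht0].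
  - rewrite PSeries_0, PS_inv_0, em1_quot_0. field.
  - rewrite e_deg_sub_1 by assumption.
    assert (HQ : PSeries (em1_quot mu) t <> 0) by (intros E; rewrite E in Hinv; lra).
    apply (Rmult_eq_reg_l (PSeries (em1_quot mu) t)); [|exact HQ].
    rewrite Hinv. field. split; assumption.
Qed.

Lemma deg_bernoulli_PS_inv mu n : mu <> 0 ->
  deg_bernoulli n mu = PS_inv (em1_quot mu) n * INR (fact n).
Proof.
  intros Hmu. unfold deg_bernoulli.
  rewrite (Derive_n_ext_loc _ _ n 0 (deg_bern_gf_PSeries mu Hmu)).
  apply Derive_n_coef, CV_radius_PS_inv_em1_quot_gt0.
Qed.

Lemma deg_bern_gf_sub_half lam t : lam <> 0 -> 0 < 1 + lam * t ->
  deg_bern_gf lam t - deg_bern_gf (lam / 2) (2 * t) = t / (1 + e_deg lam t).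
Proof.
  intros Hl Hp.
  assert (He : 0 < e_deg lam t) by (unfold e_deg, Rpower; apply exp_pos).
  unfold deg_bern_gf. destruct (Req_EM_T t 0) as [->|Ht].
  - rewrite Rmult_0_r. destruct (Req_EM_T 0 0) as [_|]; [field; lra | contradiction].
  - destruct (Req_EM_T (2 * t) 0) as [|_]; [lra|].
    rewrite e_deg_half by assumption.
    assert (He1 : e_deg lam t - 1 <> 0).
    { intros E. apply Ht, (e_deg_eq_1 lam); [assumption | assumption | lra]. }
    assert (He2 : e_deg lam t ^ 2 - 1 <> 0).
    { replace (e_deg lam t ^ 2 - 1) with ((e_deg lam t - 1) * (e_deg lam t + 1)) by ring.
      apply Rmult_integral_contrapositive. split; [assumption | lra]. }
    field. split; [|split]; assumption || lra.
Qed.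

Lemma div_one_add_e_deg_PSeries mu : mu <> 0 ->
  locally 0 (fun t => t / (1 + e_deg mu t) = PSeries (PS_incr_1 (PS_inv (ep1 mu))) t).
Proof.
  intros Hmu.
  generalize (filter_and _ _ (locally_abs_lt_inv_one_add_abs mu)
    (PSeries_mult_PS_inv _ (ep1_0_neq0 mu) (CV_radius_ep1_gt0 mu))).
  apply filter_imp. intros t [Ht Hinv].
  rewrite PSeries_incr_1, one_add_e_deg_PSeries by assumption.
  assert (HD : PSeries (ep1 mu) t <> 0) by (intros E; rewrite E in Hinv; lra).
  apply (Rmult_eq_reg_l (PSeries (ep1 mu) t)); [|exact HD].
  replace (PSeries (ep1 mu) t * (t * PSeries (PS_inv (ep1 mu)) t))
    with (t * (PSeries (ep1 mu) t * PSeries (PS_inv (ep1 mu)) t)) by ring.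
  rewrite Hinv. field. exact HD.
Qed.

Lemma deg_bern_gf_sub_half_PSeries lam : lam <> 0 ->
  locally 0 (fun t => deg_bern_gf lam t - deg_bern_gf (lam / 2) (2 * t) =
    PSeries (PS_minus (PS_inv (em1_quot lam))
                      (fun n => 2 ^ n * PS_inv (em1_quot (lam / 2)) n)) t).
Proof.
  intros Hl. assert (Hl2 : lam / 2 <> 0) by lra.
  set (A := PS_inv (em1_quot lam)).
  set (B := fun n => 2 ^ n * PS_inv (em1_quot (lam / 2)) n).
  pose proof (CV_radius_PS_inv_em1_quot_gt0 lam) as HA.
  pose proof (CV_radius_scale_gt0 2 _ (CV_radius_PS_inv_em1_quot_gt0 (lam / 2))) as HB.
  generalize (filter_and _ _ (deg_bern_gf_PSeries lam Hl)
    (filter_and _ _ (locally_0_scal _ 2 (deg_bern_gf_PSeries (lam / 2) Hl2))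
      (filter_and _ _ (locally_CV_radius A HA) (locally_CV_radius B HB)))).
  apply filter_imp. intros t (E1 & E2 & RA & RB).
  rewrite PSeries_minus by (apply CV_radius_inside; assumption).
  rewrite E1, E2. unfold B. rewrite PSeries_scale. reflexivity.
Qed.

Lemma PS_inv_em1_quot_half lam n : lam <> 0 ->
  PS_inv (em1_quot lam) (S n) - 2 ^ S n * PS_inv (em1_quot (lam / 2)) (S n)
  = PS_inv (ep1 lam) n.
Proof.
  intros Hl. assert (Hl2 : lam / 2 <> 0) by lra.
  change (PS_minus (PS_inv (em1_quot lam)) (fun n => 2 ^ n * PS_inv (em1_quot (lam / 2)) n) (S n)
          = PS_incr_1 (PS_inv (ep1 lam)) (S n)).
  apply PSeries_ext_recip.
  - apply CV_radius_minus_gt0, CV_radius_scale_gt0; apply CV_radius_PS_inv_em1_quot_gt0.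
  - rewrite CV_radius_incr_1.
    apply CV_radius_PS_inv_gt0; [apply ep1_0_neq0 | apply CV_radius_ep1_gt0].
  - generalize (filter_and _ _ (deg_bern_gf_sub_half_PSeries lam Hl)
      (filter_and _ _ (div_one_add_e_deg_PSeries lam Hl) (locally_abs_lt_inv_one_add_abs lam))).
    apply filter_imp. intros t (E1 & E2 & Ht).
    rewrite <- E1, <- E2. apply deg_bern_gf_sub_half; [exact Hl | apply one_add_mul_pos, Ht].
Qed.

Theorem theorem13 (lam : R) (S2 : nat -> nat -> R) (n : nat) :
  lam <> 0 ->
  is_deg_stirling2 lam S2 ->
  sum_f_R0 (fun k => (-1) ^ k * / 2 ^ (k + 1) * INR (Stdlib.Arith.Factorial.fact k) * S2 n k) n
  = / INR (n + 1) *
    (deg_bernoulli (n + 1) lam - 2 ^ (n + 1) * deg_bernoulli (n + 1) (lam / 2)).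
Proof.
  intros Hlam HS.
  assert (Hlam2 : lam / 2 <> 0) by lra.
  rewrite (sum_stirling_inv_ep1 lam S2 n HS), inv_ep1_coef_PS_inv.
  rewrite <- (PS_inv_em1_quot_half lam n Hlam).
  rewrite Nat.add_1_r, !deg_bernoulli_PS_inv by assumption.
  rewrite fact_simpl, mult_INR. field. apply not_0_INR. lia.
Qed.
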